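(* Let $n\geq 0$. There does not exist a set $\Phi$ of modal formulas such that, for every transitive Kripke frame $\mathcal{F}$, every formula of $\Phi$ is valid in $\mathcal{F}$ if and only if $\mathcal{F}$ has circumference at most $n$.
   Context: Modal formulas are built from a denumerable set of propositional variables using $\top,\bot,\neg,\land,\lor,\to$ and unary modalities $\Diamond,\Box$. A (Kripke) frame is $\mathcal{F}=(W,R)$ with $R$ a binary relation on a set $W$; a model on it adds a valuation $V$ assigning subsets of $W$ to variables; truth sets are defined inductively with Boolean connectives interpreted set-theoretically, $\Diamond\varphi$ true at $x$ iff some $R$-successor of $x$ satisfies $\varphi$, and $\Box\varphi$ true at $x$ iff all $R$-successors of $x$ satisfy $\varphi$. A formula is valid in $\mathcal{F}$ if it is true at every point of every model on $\mathcal{F}$. A frame is transitive if $R$ is transitive. A cycle of length $m\geq 1$ is a sequence $x_1,\dots,x_m$ of distinct points with $x_1Rx_2R\cdots Rx_mRx_1$; the circumference of a frame is the supremum of the lengths of its cycles (0 if there are none). *)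

From Stdlib Require Import Arith.

Inductive form : Type :=
| Var : nat -> form
| Top : form
| Bot : form
| Neg : form -> form
| And : form -> form -> form
| Or : form -> form -> form
| Imp : form -> form -> form
| Dia : form -> form
| Box : form -> form.

Fixpoint sat {W : Type} (R : W -> W -> Prop) (V : nat -> W -> Prop)
  (x : W) (f : form) : Prop :=
  match f with
  | Var p => V p x
  | Top => True
  | Bot => False
  | Neg a => ~ sat R V x a
  | And a b => sat R V x a /\ sat R V x b
  | Or a b => sat R V x a \/ sat R V x b
  | Imp a b => sat R V x a -> sat R V x b
  | Dia a => exists y, R x y /\ sat R V y a
  | Box a => forall y, R x y -> sat R V y a
  end.

Definition valid {W : Type} (R : W -> W -> Prop) (f : form) : Prop :=
  forall (V : nat -> W -> Prop) (x : W), sat R V x f.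

Definition transitive_frame {W : Type} (R : W -> W -> Prop) : Prop :=
  forall x y z, R x y -> R y z -> R x z.

Definition is_cycle {W : Type} (R : W -> W -> Prop) (m : nat) (x : nat -> W) : Prop :=
  1 <= m /\
  (forall i j, i < m -> j < m -> x i = x j -> i = j) /\
  (forall i, i < m -> R (x i) (x ((i + 1) mod m))).

(* circumference (supremum of cycle lengths, 0 if none) is at most n *)
Definition circumference_le {W : Type} (R : W -> W -> Prop) (n : nat) : Prop :=
  forall m x, is_cycle R m x -> m <= n.

(* A frame in which every arrow strictly increases a natural-number level has
   no cycles at all, so its circumference is at most n.  Such a frame, the
   points of W leveled by nat with arrows going strictly upwards, maps by a
   p-morphism onto the universal relation on W.  Validity is preserved under
   surjective p-morphisms, but the universal relation on an infinite W has
   cycles of every length: circumference at most n is not modally definable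
   over transitive frames. *)
From Stdlib Require Import Arith Lia.

Section PMorphism.

Variables (W W' : Type) (R : W -> W -> Prop) (R' : W' -> W' -> Prop).
Variable f : W -> W'.
Hypothesis pmorphism_forth : forall x y, R x y -> R' (f x) (f y).
Hypothesis pmorphism_back : forall x y', R' (f x) y' -> exists y, R x y /\ f y = y'.

Lemma sat_pmorphism (V : nat -> W' -> Prop) (phi : form) (x : W) :
  sat R (fun p w => V p (f w)) x phi <-> sat R' V (f x) phi.
Proof.
  revert x; induction phi as [p| | |a IHa|a IHa b IHb|a IHa b IHb|a IHa b IHb|a IHa|a IHa];
    intros x; simpl; try tauto.
  - rewrite IHa; tauto.
  - rewrite IHa, IHb; tauto.
  - rewrite IHa, IHb; tauto.
  - rewrite IHa, IHb; tauto.
  - split.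
    + intros [y [Rxy Hy]]. exists (f y). split; [now apply pmorphism_forth | now apply IHa].
    + intros [y' [Rxy' Hy']].
      destruct (pmorphism_back x y' Rxy') as [y [Rxy <-]].
      exists y. split; [exact Rxy | now apply IHa].
  - split.
    + intros H y' Rxy'.
      destruct (pmorphism_back x y' Rxy') as [y [Rxy <-]].
      now apply IHa, H.
    + intros H y Rxy. now apply IHa, H, pmorphism_forth.
Qed.

Lemma valid_pmorphic_image (phi : form) :
  (forall x', exists x, f x = x') -> valid R phi -> valid R' phi.
Proof.
  intros f_surj Hphi V x'.
  destruct (f_surj x') as [x <-].
  apply sat_pmorphism, Hphi.
Qed.

End PMorphism.

Lemma circumference_le_of_level {W : Type} (R : W -> W -> Prop) (level : W -> nat) n :
  (forall x y, R x y -> level x < level y) -> circumference_le R n.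
Proof.
  intros level_lt m x [m_pos [_ step]]. exfalso.
  assert (climb : forall i, i < m -> level (x 0) + i <= level (x i)).
  { induction i as [|i IHi]; intros Hi; [lia|].
    specialize (level_lt _ _ (step i ltac:(lia))).
    rewrite Nat.mod_small, Nat.add_1_r in level_lt by lia.
    specialize (IHi ltac:(lia)). lia. }
  specialize (climb (m - 1) ltac:(lia)).
  specialize (level_lt _ _ (step (m - 1) ltac:(lia))).
  rewrite Nat.sub_add, Nat.mod_same in level_lt by lia.
  lia.
Qed.

Lemma universal_is_cycle (m : nat) :
  1 <= m -> is_cycle (fun _ _ : nat => True) m (fun i => i).
Proof. intros m_pos. repeat split; auto. Qed.

Definition level_lt {W : Type} (a b : nat * W) : Prop := fst a < fst b.

Lemma level_lt_transitive (W : Type) : transitive_frame (@level_lt W).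
Proof. unfold transitive_frame, level_lt; lia. Qed.

Lemma valid_universal_of_level_lt {W : Type} (phi : form) :
  valid (@level_lt W) phi -> valid (fun _ _ : W => True) phi.
Proof.
  apply valid_pmorphic_image with (f := snd).
  - tauto.
  - intros [k x] y' _. exists (S k, y'). split; [unfold level_lt; simpl; lia | reflexivity].
  - intros x'. now exists (0, x').
Qed.

Theorem theorem2 (n : nat) :
  ~ exists Phi : form -> Prop,
      forall (W : Type) (R : W -> W -> Prop),
        transitive_frame R ->
        ((forall phi, Phi phi -> valid R phi) <-> circumference_le R n).
Proof.
  intros [Phi defines].
  assert (valid_level : forall phi, Phi phi -> valid (@level_lt nat) phi).
  { apply defines; [apply level_lt_transitive |].
    apply circumference_le_of_level with (level := fst). tauto. }
  assert (circ_universal : circumference_le (fun _ _ : nat => True) n).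
  { apply defines; [unfold transitive_frame; tauto |].
    intros phi Hphi. now apply valid_universal_of_level_lt, valid_level. }
  specialize (circ_universal (S n) _ (universal_is_cycle (S n) ltac:(lia))).
  lia.
Qed.
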